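(* Let $X$ be a Banach space, $B$ a subset of $B_{X^{*}}$ that (I)-generates $B_{X^{*}}$, and $A=(a_{nk})_{n,k\in\mathbb{N}}$ a regular matrix. Let $(x_n)_{n\in\mathbb{N}}$ be a bounded sequence in $X$ and $x\in X$ such that $(x^{*}(x_n))_{n\in\mathbb{N}}$ is $F_A$-convergent to $x^{*}(x)$ for every $x^{*}\in B$. Then $(x^{*}(x_n))_{n\in\mathbb{N}}$ is $F_A$-convergent to $x^{*}(x)$ for every $x^{*}\in X^{*}$. In particular, if $X$ is a real Banach space, the same holds with $F_A$-convergence replaced by almost convergence.
   Context: A complex matrix $A=(a_{nk})$ is regular if $\sup_n\sum_k|a_{nk}|<\infty$, $\lim_n\sum_k a_{nk}=1$ and $\lim_n a_{nk}=0$ for all $k$. A bounded scalar sequence $(s_k)$ is $F_A$-convergent to $s$ if $\sum_{k=1}^\infty a_{nk}s_{k+l}\to s$ as $n\to\infty$, uniformly in $l\in\mathbb{N}_0$. A Banach limit is a linear functional $L:\ell^\infty\to\mathbb{R}$ (real $\ell^\infty$) with $L(1,1,\dots)=1$, $L(\mathbf{x})\ge0$ whenever $\mathbf{x}\ge0$, and $L(T\mathbf{x})=L(\mathbf{x})$ where $T$ is the left shift. A bounded real sequence is almost convergent to $s$ if $L((s_k))=s$ for every Banach limit $L$. A subset $B\subseteq B_{X^*}$ (I)-generates $B_{X^*}$ if whenever $B=\bigcup_{n=1}^\infty B_n$, $B_{X^*}$ equals the norm-closure of the convex hull of $\bigcup_n\overline{\mathrm{co}}^{w^*}(B_n)$ (weak*-closed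 convex hulls). *)

From HB Require Import structures.
From mathcomp Require Import all_boot all_order all_algebra.
From mathcomp Require Import all_classical all_reals all_analysis.
From mathcomp Require Export complex.
Set Implicit Arguments.
Unset Strict Implicit.
Unset Printing Implicit Defensive.
Import Order.TTheory GRing.Theory Num.Theory.
Import numFieldNormedType.Exports.
Local Open Scope classical_set_scope.
Local Open Scope ring_scope.

Definition bounded_scalar_seq {K : numDomainType} (s : nat -> K) : Prop :=
  exists M : K, forall k, `|s k| <= M.

Definition series_sums_to {K : numDomainType} (u : nat -> K) (sigma : K) : Prop :=
  forall e : K, 0 < e -> exists N : nat, forall m : nat, (N <= m)%N ->
    `|\sum_(k < m) u k - sigma| < e.

(* Regular (Silverman-Toeplitz) matrix A = (a_{nk}), indices from 0. *)
Definition regular_matrix {K : numDomainType} (A : nat -> nat -> K) : Prop :=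
  [/\
      (exists M : K, forall n m : nat, \sum_(k < m) `|A n k| <= M),
      (forall e : K, 0 < e -> exists N : nat, forall n : nat, (N <= n)%N ->
         exists sigma : K, series_sums_to (A n) sigma /\ `|sigma - 1| < e) &
      (forall k : nat, forall e : K, 0 < e -> exists N : nat, forall n : nat,
         (N <= n)%N -> `|A n k| < e)].

Definition FA_convergent {K : numDomainType} (A : nat -> nat -> K)
    (s : nat -> K) (t : K) : Prop :=
  bounded_scalar_seq s /\
  forall e : K, 0 < e -> exists N : nat, forall n : nat, (N <= n)%N ->
    forall l : nat, exists sigma : K,
      series_sums_to (fun k => A n k * s (k + l)%N) sigma /\ `|sigma - t| < e.

Definition bounded_real_seq {R : realType} (s : nat -> R) : Prop :=
  exists M : R, forall k, `|s k| <= M.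

(* L is a functional on l^infty (its values outside l^infty are irrelevant). *)
Definition BanachLimit {R : realType} (L : (nat -> R) -> R) : Prop :=
  [/\ (forall (a : R) (s u : nat -> R), bounded_real_seq s -> bounded_real_seq u ->
         L (fun k => a * s k + u k) = a * L s + L u),
      L (fun _ => 1) = 1,
      (forall s : nat -> R, bounded_real_seq s -> (forall k, 0 <= s k) -> 0 <= L s) &
      (forall s : nat -> R, bounded_real_seq s -> L (fun k => s k.+1) = L s)].

Definition almost_convergent {R : realType} (s : nat -> R) (t : R) : Prop :=
  bounded_real_seq s /\ forall L, BanachLimit L -> L s = t.

Section Dual.
Context {K : numFieldType} (X : normedModType K).

Definition bounded_X_seq (xs : nat -> X) : Prop :=
  exists M : K, forall n, `|xs n| <= M.

Definition linear_functional (f : X -> K) : Prop :=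
  forall (a : K) (u v : X), f (a *: u + v) = a * f u + f v.

Definition dual_space : set (X -> K) :=
  [set f | linear_functional f /\ exists M : K, forall u, `|f u| <= M * `|u|].

Definition dual_ball : set (X -> K) :=
  [set f | linear_functional f /\ forall u, `|f u| <= `|u|].

Definition conv_hull (S : set (X -> K)) : set (X -> K) :=
  [set g | exists (n : nat) (c : 'I_n -> K) (h : 'I_n -> X -> K),
     [/\ forall i, 0 <= c i, \sum_i c i = 1, forall i, S (h i) &
         g = fun u => \sum_i c i * h i u]].

(* closure in X^* for the weak* topology (pointwise convergence on X) *)
Definition wstar_closure (S : set (X -> K)) : set (X -> K) :=
  [set f | dual_space f /\
     forall (m : nat) (pts : 'I_m -> X) (e : K), 0 < e ->
       exists g, S g /\ forall i, `|f (pts i) - g (pts i)| < e].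

Definition wstar_closed_conv_hull (S : set (X -> K)) : set (X -> K) :=
  wstar_closure (conv_hull S).

Definition norm_closure (S : set (X -> K)) : set (X -> K) :=
  [set f | dual_space f /\
     forall e : K, 0 < e -> exists g, S g /\ forall u, `|f u - g u| <= e * `|u|].

Definition I_generates (B : set (X -> K)) : Prop :=
  forall Bn : nat -> set (X -> K), B = \bigcup_n Bn n ->
    dual_ball = norm_closure (conv_hull (\bigcup_n wstar_closed_conv_hull (Bn n))).

End Dual.

Arguments bounded_X_seq {K X}.
Arguments linear_functional {K X}.
Arguments dual_space {K} X.
Arguments dual_ball {K} X.
Arguments conv_hull {K X}.
Arguments wstar_closure {K X}.
Arguments wstar_closed_conv_hull {K X}.
Arguments norm_closure {K X}.
Arguments I_generates {K X}.

(* Replacing x_n by x_n - x, it suffices to show that f(x_n) is F_A-convergent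
   to 0 for every f in X^*.  Call f (b, m)-small if every A-transform
   sum_k a_nk f(x_(k+l)) with n >= m has modulus at most b, uniformly in l.
   For fixed b the (b, m)-small functionals increase with m and form convex
   sets; on the dual ball they are weak*-closed up to a loss of 4 eta (a weak*
   approximant controls the finitely many terms k < K, and the tails are
   uniformly small on the ball because the rows of A are absolutely summable),
   and norm-closed up to 3 eta.  Splitting B into the pieces of
   (b/8, m)-small functionals, (I)-generation rebuilds the dual ball from them,
   so every functional of norm at most 1 is (b, m)-small for some m; scaling
   handles all of X^*.  Real and complex scalars are treated together through
   an order-preserving isometric embedding of the scalars into C.

   Almost convergence is F_A-convergence for the Cesaro matrix: by Lorentz's
   theorem both mean that the averages over windows of length p converge
   uniformly in their position.  The hard direction builds a Banach limit as an
   ultrafilter limit of window averages along windows that stay far from t. *)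

From HB Require Import structures.
From mathcomp Require Import all_boot all_order all_algebra.
From mathcomp Require Import all_classical all_reals all_analysis.
From mathcomp Require Import complex.
From mathcomp Require Import lra ring.
Import Order.TTheory GRing.Theory Num.Theory.
Import numFieldNormedType.Exports.
Local Open Scope classical_set_scope.
Local Open Scope ring_scope.
Local Open Scope complex_scope.
Set Implicit Arguments.
Unset Strict Implicit.
Unset Printing Implicit Defensive.

Notation CRe := (@complex.Re _).
Notation CIm := (@complex.Im _).

Section SeriesSums.
Variable K : numFieldType.
Implicit Types (u v : nat -> K) (a b c : K).

Lemma sums_to_ext u v a : (forall k, u k = v k) ->
  series_sums_to u a -> series_sums_to v a.
Proof.
move=> uv H e e0; have [N HN] := H e e0; exists N => m Hm.
by under eq_bigr do rewrite -uv; exact: HN.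
Qed.

Lemma sums_to0 : series_sums_to (fun _ => 0 : K) 0.
Proof. by move=> e e0; exists 0%N => m _; rewrite big1 // subr0 normr0. Qed.

Lemma sums_toD u v a b : series_sums_to u a -> series_sums_to v b ->
  series_sums_to (fun k => u k + v k) (a + b).
Proof.
move=> Hu Hv e e0.
have e2 : 0 < e / 2 by rewrite divr_gt0.
have [N1 H1] := Hu _ e2; have [N2 H2] := Hv _ e2.
exists (maxn N1 N2) => m; rewrite geq_max => /andP[m1 m2].
rewrite big_split /= opprD addrACA (splitr e).
by apply: le_lt_trans (ler_normD _ _) _; apply: ltrD; [exact: H1 | exact: H2].
Qed.

Lemma sums_toZ u a c : series_sums_to u a ->
  series_sums_to (fun k => c * u k) (c * a).
Proof.
move=> Hu e e0.
have c1 : 0 < `|c| + 1 by rewrite ltr_wpDl.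
have [N HN] := Hu _ (divr_gt0 e0 c1); exists N => m /HN h.
rewrite -mulr_sumr -mulrBr normrM.
apply: le_lt_trans (ler_wpM2l (normr_ge0 _) (ltW h)) _.
by rewrite mulrA ltr_pdivrMr // mulrDr mulr1 mulrC ltrDl.
Qed.

Lemma sums_toN u a : series_sums_to u a ->
  series_sums_to (fun k => - u k) (- a).
Proof.
move=> /(sums_toZ (-1)); rewrite mulN1r; apply: sums_to_ext => k.
by rewrite mulN1r.
Qed.

Lemma sums_to_sum (I : Type) (r : seq I) (U : I -> nat -> K) (s : I -> K) :
  (forall i, series_sums_to (U i) (s i)) ->
  series_sums_to (fun k => \sum_(i <- r) U i k) (\sum_(i <- r) s i).
Proof.
move=> H; elim: r => [|i r IH].
  by rewrite big_nil; apply: sums_to_ext sums_to0 => k; rewrite big_nil.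
by rewrite big_cons; apply: sums_to_ext (sums_toD (H i) IH) => k; rewrite big_cons.
Qed.

End SeriesSums.

Lemma scaled_eps (F : numFieldType) (c e : F) : 0 <= c -> 0 < e ->
  0 < e / (c + 1) /\ c * (e / (c + 1)) <= e.
Proof.
move=> c0 e0; have c1 : 0 < c + 1 by rewrite ltr_wpDl.
split; first by rewrite divr_gt0.
by rewrite mulrA ler_pdivrMr // mulrDr mulr1 mulrC lerDl ltW.
Qed.

Lemma ler_sum_ord_prefix (F : numDomainType) (G : nat -> F) m n :
  (forall k, 0 <= G k) -> (m <= n)%N -> \sum_(k < m) G k <= \sum_(k < n) G k.
Proof.
move=> G0 mn; rewrite -!(big_mkord xpredT) (@big_cat_nat _ _ _ m 0 n _ _ (leq0n m) mn) /=.
by rewrite lerDl sumr_ge0.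
Qed.

Lemma sum_ord_prefixB (F : zmodType) (G : nat -> F) m n : (m <= n)%N ->
  \sum_(k < n) G k - \sum_(k < m) G k = \sum_(m <= k < n) G k.
Proof.
move=> mn; rewrite -!(big_mkord xpredT) (@big_cat_nat _ _ _ m 0 n _ _ (leq0n m) mn) /=.
by rewrite addrAC subrr add0r.
Qed.

Section ComplexFacts.
Variable R : realType.
Local Notation C := R[i].

Lemma ReD (x y : C) : CRe (x + y) = CRe x + CRe y. Proof. by case: x; case: y. Qed.
Lemma ImD (x y : C) : CIm (x + y) = CIm x + CIm y. Proof. by case: x; case: y. Qed.
Lemma ReB (x y : C) : CRe (x - y) = CRe x - CRe y. Proof. by case: x; case: y. Qed.
Lemma ImB (x y : C) : CIm (x - y) = CIm x - CIm y. Proof. by case: x; case: y. Qed.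

Lemma Re_sum n (F : 'I_n -> C) : CRe (\sum_i F i) = \sum_i CRe (F i).
Proof. exact: (big_morph _ ReD (erefl : CRe (0 : C) = 0)). Qed.

Lemma Im_sum n (F : 'I_n -> C) : CIm (\sum_i F i) = \sum_i CIm (F i).
Proof. exact: (big_morph _ ImD (erefl : CIm (0 : C) = 0)). Qed.

Lemma normcR (r : R) : `|r%:C| = `|r|%:C.
Proof. by rewrite normc_def /= expr0n /= addr0 sqrtr_sqr. Qed.

Lemma normci : `|'i| = 1 :> C.
Proof. by rewrite normc_def /= expr0n expr1n add0r sqrtr1. Qed.

Lemma ge0_complex_real (c : C) : 0 <= c -> c = (CRe c)%:C.
Proof. by case: c => a b; rewrite lecE /= => /andP[/eqP -> _]. Qed.

Lemma gt0_complex_real (c : C) : 0 < c -> c = (CRe c)%:C /\ 0 < CRe c.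
Proof. by case: c => a b; rewrite ltcE /= => /andP[/eqP -> ->]. Qed.

Lemma ler_Re (x y : C) : x <= y -> CRe x <= CRe y.
Proof. by rewrite lecE => /andP[]. Qed.

Lemma normc_le_Re_Im (z : C) : `|z| <= (`|CRe z| + `|CIm z|)%:C.
Proof.
rewrite {1}[z]complexE rmorphD /=; apply: le_trans (ler_normD _ _) _.
by rewrite normrM !normcR normci mul1r.
Qed.

Lemma normc_ge_Im (z : C) : `|CIm z|%:C <= `|z|.
Proof. by have := normc_ge_Re (z * 'i); rewrite ReiNIm normrN normrM normci mulr1. Qed.

End ComplexFacts.

Section AbsoluteSummability.
Variable R : realType.
Local Notation C := R[i].

Lemma bounded_abs_sums_cauchy (a : nat -> C) (Ma : C) :
  (forall m, \sum_(k < m) `|a k| <= Ma) -> forall eta : C, 0 < eta ->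
  exists Kt, forall K', (Kt <= K')%N ->
    \sum_(k < K') `|a k| - \sum_(k < Kt) `|a k| <= eta.
Proof.
move=> HM eta eta0.
pose t m := CRe (\sum_(k < m) `|a k|).
have tE m : \sum_(k < m) `|a k| = (t m)%:C by apply: ge0_complex_real; rewrite sumr_ge0.
have hs : has_sup (range t).
  split; first by exists (t 0%N), 0%N.
  by exists (CRe Ma) => _ [m _ <-]; exact: ler_Re (HM m).
have [etaE eta0'] := gt0_complex_real eta0.
have [_ [Kt _ <-] hKt] := sup_adherent eta0' hs.
exists Kt => K' hK.
have hK' : t K' <= sup (range t) by apply: sup_upper_bound => //; exists K'.
rewrite !tE -rmorphB etaE lecR; lra.
Qed.

Lemma bounded_abs_series_sums_to (a s : nat -> C) (Ma Ms : C) :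
  (forall m, \sum_(k < m) `|a k| <= Ma) -> (forall k, `|s k| <= Ms) ->
  exists sigma, series_sums_to (fun k => a k * s k) sigma.
Proof.
move=> Ha Hs; pose u k := a k * s k.
have Ms0 : 0 <= Ms := le_trans (normr_ge0 _) (Hs 0%N).
have bnd m : \sum_(k < m) `|u k| <= Ma * Ms.
  apply: (@le_trans _ _ (\sum_(k < m) `|a k| * Ms)); last by rewrite -mulr_suml ler_wpM2r.
  by apply: ler_sum => k _; rewrite normrM ler_wpM2l.
(* the real and imaginary parts are absolutely convergent real series *)
have cv (f : C -> R) : (forall z, `|f z|%:C <= `|z|) -> cvgn (series (fun k => f (u k))).
  move=> fz; apply: normed_cvg; apply: nondecreasing_is_cvgn.
    move=> n m nm; rewrite /series /=.
    by apply: (@nondecreasing_series _ (fun k => `|f (u k)|) xpredT 0%N).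
  exists (CRe (Ma * Ms)) => _ [n _ <-].
  have h : (\sum_(0 <= k < n) `|f (u k)|)%:C <= Ma * Ms.
    rewrite rmorph_sum big_mkord /=; apply: le_trans (bnd n).
    by apply: ler_sum => k _; exact: fz.
  exact: ler_Re h.
have /cvgrPdist_lt hr := cv _ (@normc_ge_Re R).
have /cvgrPdist_lt hi := cv _ (@normc_ge_Im R).
exists (limn (series (CRe \o u)) +i* limn (series (CIm \o u))).
move=> e /gt0_complex_real [-> e0].
have [N1 _ H1] := hr _ (divr_gt0 e0 (ltr0Sn _ 1)).
have [N2 _ H2] := hi _ (divr_gt0 e0 (ltr0Sn _ 1)).
exists (maxn N1 N2) => m; rewrite geq_max => /andP[m1 m2].
apply: le_lt_trans (normc_le_Re_Im _) _; rewrite ltcR.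
have := H1 m m1; have := H2 m m2.
rewrite /series /= !big_mkord ReB ImB Re_sum Im_sum /= => h2 h1.
by rewrite (splitr (CRe e)); apply: ltrD; rewrite distrC.
Qed.

End AbsoluteSummability.

Section LinearFunctionals.
Variables (K : numFieldType) (X : normedModType K).
Implicit Types f : X -> K.

Lemma linear_functional0 f : linear_functional f -> f 0 = 0.
Proof.
move=> lf; have := lf 1 0 0; rewrite scale1r addr0 mul1r => h.
by apply/esym/(@addrI _ (f 0)); rewrite addr0.
Qed.

Lemma linear_functionalZ f a u : linear_functional f -> f (a *: u) = a * f u.
Proof. by move=> lf; have := lf a u 0; rewrite addr0 linear_functional0 // addr0. Qed.

Lemma linear_functionalB f u v : linear_functional f -> f (u - v) = f u - f v.
Proof.
move=> lf; have := lf 1 u (- v); rewrite scale1r mul1r => ->.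
by rewrite -scaleN1r linear_functionalZ // mulN1r.
Qed.

Lemma linear_functional_comb n (c : 'I_n -> K) (h : 'I_n -> X -> K) :
  (forall i, linear_functional (h i)) ->
  linear_functional (fun u => \sum_i c i * h i u).
Proof.
move=> lh a u v; rewrite mulr_sumr -big_split /=; apply: eq_bigr => i _.
by rewrite lh mulrDr mulrCA.
Qed.

Lemma conv_hull_dual_ball S : S `<=` dual_ball X -> conv_hull S `<=` dual_ball X.
Proof.
move=> SB g [n [c [h [c0 c1 hS ->]]]]; split.
  by apply: linear_functional_comb => i; have [] := SB _ (hS i).
move=> u; apply: le_trans (ler_norm_sum _ _ _) _.
apply: (@le_trans _ _ (\sum_i c i * `|u|)); last by rewrite -mulr_suml c1 mul1r.
apply: ler_sum => i _; rewrite normrM ger0_norm // ler_wpM2l //.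
by have [] := SB _ (hS i).
Qed.

Lemma dual_space_norm_bound f M : (forall u, `|f u| <= M * `|u|) ->
  forall u, `|f u| <= `|M| * `|u|.
Proof.
move=> Hf u; have h := Hf u.
have h0 : 0 <= M * `|u| := le_trans (normr_ge0 _) h.
by rewrite -(ger0_norm h0) normrM normr_id in h.
Qed.

End LinearFunctionals.

Section FASmall.
Variable R : realType.
Local Notation C := R[i].
Variables (K : numFieldType) (X : normedModType K) (iota : {rmorphism K -> C}).
Hypothesis iota_norm : forall a : K, `|iota a| = iota `|a|.
Hypothesis iota_le : forall a b : K, a <= b -> iota a <= iota b.
Hypothesis iota_small : forall e : C, 0 < e -> exists2 d : K, 0 < d & iota d <= e.
Variables (A : nat -> nat -> C) (Ma : C) (y : nat -> X) (My : K).
Hypothesis A_abs_bounded : forall n m, \sum_(k < m) `|A n k| <= Ma.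
Hypothesis y_bounded : forall k, `|y k| <= My.

Definition FA_small (b : C) (m : nat) : set (X -> K) :=
  [set f | linear_functional f /\ forall n, (m <= n)%N -> forall l, exists sigma,
     series_sums_to (fun k => A n k * iota (f (y (k + l)))) sigma /\ `|sigma| <= b].

Let Ma_ge0 : 0 <= Ma.
Proof. by have := A_abs_bounded 0 0; rewrite big_ord0. Qed.

Let My_ge0 : 0 <= My.
Proof. exact: le_trans (normr_ge0 _) (y_bounded 0). Qed.

Lemma iota_ge0 a : 0 <= a -> 0 <= iota a.
Proof. by move=> /iota_le; rewrite rmorph0. Qed.

Lemma iota_dual_bounded (f : X -> K) (Mf : K) : (forall u, `|f u| <= Mf * `|u|) ->
  forall k, `|iota (f (y k))| <= iota (`|Mf| * My).
Proof.
move=> Hf k; rewrite iota_norm; apply: iota_le.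
exact: le_trans (dual_space_norm_bound Hf _) (ler_wpM2l (normr_ge0 _) (y_bounded k)).
Qed.

Lemma iota_scaled_eps (c e : C) : 0 <= c -> 0 < e ->
  exists2 d : K, 0 < d & c * iota d <= e.
Proof.
move=> c0 e0; have [h1 h2] := scaled_eps c0 e0.
have [d d0 hd] := iota_small h1; exists d => //.
by apply: le_trans h2; apply: ler_wpM2l.
Qed.

Lemma transform_summable (f : X -> K) n l : dual_space X f ->
  exists sigma, series_sums_to (fun k => A n k * iota (f (y (k + l)))) sigma.
Proof.
move=> [_ [Mf Hf]].
exact: bounded_abs_series_sums_to (A_abs_bounded n) (fun k => iota_dual_bounded Hf (k + l)).
Qed.

Lemma FA_small_mono b b' m m' : b <= b' -> (m <= m')%N ->
  FA_small b m `<=` FA_small b' m'.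
Proof.
move=> bb mm f [lf H]; split => // n mn l.
have [s [Hs Hb]] := H n (leq_trans mm mn) l.
by exists s; split => //; apply: le_trans bb.
Qed.

Lemma conv_hull_FA_small b m S : S `<=` FA_small b m -> conv_hull S `<=` FA_small b m.
Proof.
move=> SC g [N [c [h [c0 c1 hS ->]]]]; split.
  by apply: linear_functional_comb => i; have [] := SC _ (hS i).
move=> n mn l.
have /fin_all_exists [s Hs] : forall i, exists s,
    series_sums_to (fun k => A n k * iota (h i (y (k + l)))) s /\ `|s| <= b.
  by move=> i; have [_ H] := SC _ (hS i); exact: H.
exists (\sum_i iota (c i) * s i); split.
  apply: sums_to_ext (sums_to_sum _ (fun i => sums_toZ (iota (c i)) (proj1 (Hs i)))) => k.
  by rewrite rmorph_sum mulr_sumr; apply: eq_bigr => i _; rewrite rmorphM mulrCA.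
apply: le_trans (ler_norm_sum _ _ _) _.
apply: (@le_trans _ _ (\sum_i iota (c i) * b)); last first.
  by rewrite -mulr_suml -rmorph_sum c1 rmorph1 mul1r.
apply: ler_sum => i _; rewrite normrM iota_norm (ger0_norm (c0 i)).
by apply: ler_wpM2l; [exact: iota_ge0 | have [] := Hs i].
Qed.

Lemma transform_prefix_dist (f g : X -> K) n l Kt (d : C) : 0 <= d ->
  (forall k : 'I_Kt, `|iota (f (y (k + l))) - iota (g (y (k + l)))| <= d) ->
  `|\sum_(k < Kt) A n k * iota (f (y (k + l))) -
    \sum_(k < Kt) A n k * iota (g (y (k + l)))| <= Ma * d.
Proof.
move=> d0 H; rewrite -sumrB; apply: le_trans (ler_norm_sum _ _ _) _.
apply: (@le_trans _ _ (\sum_(k < Kt) `|A n k| * d)); last by rewrite -mulr_suml ler_wpM2r.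
by apply: ler_sum => k _; rewrite -mulrBr normrM ler_wpM2l.
Qed.

Lemma transform_ball_tail (g : X -> K) n l Kt K' : (forall u, `|g u| <= `|u|) ->
  (Kt <= K')%N ->
  `|\sum_(k < K') A n k * iota (g (y (k + l))) - \sum_(k < Kt) A n k * iota (g (y (k + l)))|
   <= iota My * (\sum_(k < K') `|A n k| - \sum_(k < Kt) `|A n k|).
Proof.
move=> Hg KK; rewrite (sum_ord_prefixB (fun k => A n k * iota (g (y (k + l))))) //.
rewrite (sum_ord_prefixB (fun k => `|A n k|)) //; apply: le_trans (ler_norm_sum _ _ _) _.
rewrite mulr_sumr; apply: ler_sum => k _; rewrite normrM mulrC ler_wpM2r //.
by rewrite iota_norm; apply: iota_le; apply: le_trans (Hg _) (y_bounded _).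
Qed.

Lemma wstar_closure_FA_small b m S (eta : C) : 0 < eta ->
  S `<=` dual_ball X `&` FA_small b m ->
  wstar_closure S `<=` FA_small (b + eta *+ 4) m.
Proof.
move=> eta0 SC f [fd Happ]; split; first by case: fd.
move=> n mn l; have [sf Hsf] := transform_summable n l fd.
exists sf; split => //.
have [N1 HN1] := Hsf eta eta0.
have [h1 h2] := scaled_eps (iota_ge0 My_ge0) eta0.
have [N2 HN2] := bounded_abs_sums_cauchy (A_abs_bounded n) h1.
pose Kt := maxn N1 N2.
have [d d0 hd] := iota_scaled_eps Ma_ge0 eta0.
have [g [gS Hfg]] := Happ Kt (fun i : 'I_Kt => y (i + l)) d d0.
have [[_ Hg] [_ Cg]] := SC g gS.
have [sg [Hsg sgb]] := Cg n mn l.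
have [N3 HN3] := Hsg eta eta0.
pose K' := maxn Kt N3.
pose Sf K := \sum_(k < K) A n k * iota (f (y (k + l))).
pose Sg K := \sum_(k < K) A n k * iota (g (y (k + l))).
have e1 : `|sf - Sf Kt| <= eta by rewrite distrC ltW // HN1 // leq_maxl.
have e2 : `|Sf Kt - Sg Kt| <= eta.
  apply: le_trans hd; apply: transform_prefix_dist; first exact/iota_ge0/ltW.
  by move=> k; rewrite -rmorphB iota_norm; apply/iota_le/ltW.
have e3 : `|Sg Kt - Sg K'| <= eta.
  rewrite distrC; apply: le_trans (transform_ball_tail n l Hg (leq_maxl Kt N3)) _.
  apply: le_trans h2; apply: ler_wpM2l; first exact: iota_ge0.
  apply: (@le_trans _ _ (\sum_(k < K') `|A n k| - \sum_(k < N2) `|A n k|)).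
    rewrite lerD2l lerN2.
    by apply: (@ler_sum_ord_prefix _ (fun k => `|A n k|)) => //; rewrite leq_maxr.
  by apply: HN2; rewrite (leq_trans (leq_maxr N1 N2)) // leq_maxl.
have e4 : `|Sg K' - sg| <= eta by rewrite ltW // HN3 // leq_maxr.
rewrite -[sf](subrK sg) addrC; apply: le_trans (ler_normD _ _) _; apply: lerD => //.
rewrite !mulrS mulr0n addr0.
apply: le_trans (ler_distD (Sf Kt) _ _) _; apply: lerD => //.
apply: le_trans (ler_distD (Sg Kt) _ _) _; apply: lerD => //.
by apply: le_trans (ler_distD (Sg K') _ _) _; apply: lerD.
Qed.

Lemma norm_closure_FA_small b (eta : C) (f : X -> K) : 0 < eta -> dual_space X f ->
  (forall e : K, 0 < e -> exists g, (exists m, FA_small b m g) /\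
     forall u, `|f u - g u| <= e * `|u|) ->
  exists m, FA_small (b + eta *+ 3) m f.
Proof.
move=> eta0 fd Happ.
have c0 : 0 <= Ma * iota My by rewrite mulr_ge0 // iota_ge0.
have [d d0 hd] := iota_scaled_eps c0 eta0.
have [g [[m [_ Cg]] Hfg]] := Happ d d0.
exists m; split => [|n mn l]; first by case: fd.
have [sf Hsf] := transform_summable n l fd.
exists sf; split => //.
have [sg [Hsg sgb]] := Cg n mn l.
have [N1 HN1] := Hsf eta eta0.
have [N3 HN3] := Hsg eta eta0.
pose Kt := maxn N1 N3.
pose Sf K := \sum_(k < K) A n k * iota (f (y (k + l))).
pose Sg K := \sum_(k < K) A n k * iota (g (y (k + l))).
have e1 : `|sf - Sf Kt| <= eta by rewrite distrC ltW // HN1 // leq_maxl.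
have e2 : `|Sf Kt - Sg Kt| <= eta.
  apply: le_trans hd; rewrite -mulrA [iota My * _]mulrC.
  apply: transform_prefix_dist; first by rewrite mulr_ge0 // iota_ge0 // ltW.
  move=> k; rewrite -rmorphB iota_norm -rmorphM; apply: iota_le.
  by apply: le_trans (Hfg _) _; apply: ler_wpM2l; [exact: ltW | exact: y_bounded].
have e3 : `|Sg Kt - sg| <= eta by rewrite ltW // HN3 // leq_maxr.
rewrite -[sf](subrK sg) addrC; apply: le_trans (ler_normD _ _) _; apply: lerD => //.
rewrite !mulrS mulr0n addr0.
apply: le_trans (ler_distD (Sf Kt) _ _) _; apply: lerD => //.
by apply: le_trans (ler_distD (Sg Kt) _ _) _; apply: lerD.
Qed.

Lemma conv_hull_bigcup_FA_small b (W : nat -> set (X -> K)) :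
  (forall m, W m `<=` FA_small b m) ->
  forall g, conv_hull (\bigcup_m W m) g -> exists m, FA_small b m g.
Proof.
move=> WC g [N [c [h [c0 c1 hS ->]]]].
have /fin_all_exists [mi Hmi] : forall i, exists m, W m (h i).
  by move=> i; have [m _ Wm] := hS i; exists m.
exists (\max_(i < N) mi i).
apply: (@conv_hull_FA_small b _ (FA_small b (\max_(i < N) mi i))) => //.
exists N, c, h; split => // i.
exact: FA_small_mono (le_refl b) (leq_bigmax i) _ (WC _ _ (Hmi i)).
Qed.

Theorem dual_ball_FA_small (B : set (X -> K)) : B `<=` dual_ball X -> I_generates B ->
  (forall b, 0 < b -> forall f, B f -> exists m, FA_small b m f) ->
  forall f, dual_ball X f -> forall b, 0 < b -> exists m, FA_small b m f.
Proof.
move=> BB HI HB f fball b b_gt0.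
pose b0 := b / 8%:R.
have b0_gt0 : 0 < b0 by rewrite divr_gt0 // ltr0n.
pose Bn m := B `&` FA_small b0 m.
have Beq : B = \bigcup_m Bn m.
  apply/seteqP; split => [g Bg | g [m _ [Bg _]]] //.
  by have [m Hm] := HB _ b0_gt0 g Bg; exists m.
have [fd Happ] : norm_closure (conv_hull (\bigcup_n wstar_closed_conv_hull (Bn n))) f.
  by rewrite -(HI Bn Beq).
have WC m : wstar_closed_conv_hull (Bn m) `<=` FA_small (b0 + b0 *+ 4) m.
  apply: wstar_closure_FA_small => // g cg; split.
    by apply: (conv_hull_dual_ball (S := Bn m)) => // h [/BB].
  by apply: (conv_hull_FA_small (S := Bn m)) => // h [].
have [m Hm] := norm_closure_FA_small b0_gt0 fd (fun e e0 =>
  let: ex_intro g (conj hg hfg) := Happ e e0 in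
  ex_intro _ g (conj (conv_hull_bigcup_FA_small WC hg) hfg)).
exists m; apply: FA_small_mono Hm => //.
have -> : b0 + b0 *+ 4 + b0 *+ 3 = b0 * 8%:R by rewrite !mulrS; ring.
by rewrite /b0 divfK // pnatr_eq0.
Qed.

End FASmall.

Section Reduction.
Variable R : realType.
Local Notation C := R[i].
Variables (K : numFieldType) (X : normedModType K) (iota : {rmorphism K -> C}).
Hypothesis iota_norm : forall a : K, `|iota a| = iota `|a|.
Hypothesis iota_le : forall a b : K, a <= b -> iota a <= iota b.
Variables (A : nat -> nat -> C) (xs : nat -> X) (x : X).
Hypothesis A_row_sums_to1 : forall e : C, 0 < e -> exists N : nat, forall n : nat,
  (N <= n)%N -> exists sigma : C, series_sums_to (A n) sigma /\ `|sigma - 1| < e.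

Let y k := xs k - x.

Lemma FA_small_of_FA_convergent (f : X -> K) : linear_functional f ->
  FA_convergent A (fun n => iota (f (xs n))) (iota (f x)) ->
  forall b, 0 < b -> exists m, FA_small iota A y b m f.
Proof.
move=> lf [_ H] b b0.
have b2 : 0 < b / 2 by rewrite divr_gt0.
have [h1 h2] := scaled_eps (normr_ge0 (iota (f x))) b2.
have [N1 HN1] := H _ b2.
have [N2 HN2] := A_row_sums_to1 h1.
exists (maxn N1 N2); split => // n; rewrite geq_max => /andP[n1 n2] l.
have [s [Hs hs]] := HN1 n n1 l.
have [rho [Hr hr]] := HN2 n n2.
exists (s - iota (f x) * rho); split.
  apply: sums_to_ext (sums_toD Hs (sums_toN (sums_toZ (iota (f x)) Hr))) => k.
  by rewrite /y linear_functionalB // rmorphB; ring.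
have -> : s - iota (f x) * rho = (s - iota (f x)) - iota (f x) * (rho - 1) by ring.
apply: le_trans (ler_normB _ _) _; rewrite [leRHS](splitr b); apply: lerD; first exact: ltW.
by apply: le_trans h2; rewrite normrM ler_wpM2l // ltW.
Qed.

Lemma FA_convergent_of_FA_small (f : X -> K) : dual_space X f -> bounded_X_seq xs ->
  (forall b, 0 < b -> exists m, FA_small iota A y b m f) ->
  FA_convergent A (fun n => iota (f (xs n))) (iota (f x)).
Proof.
move=> [lf [Mf Hf]] [Mx HMx] Hsmall; split.
  exists (iota (`|Mf| * Mx)) => n; rewrite iota_norm; apply: iota_le.
  exact: le_trans (dual_space_norm_bound Hf _) (ler_wpM2l (normr_ge0 _) (HMx n)).
move=> e e0.
have e2 : 0 < e / 2 by rewrite divr_gt0.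
have [h1 h2] := scaled_eps (normr_ge0 (iota (f x))) e2.
have [m [_ Hm]] := Hsmall _ (divr_gt0 e2 (ltr0Sn _ 1)).
have [N2 HN2] := A_row_sums_to1 h1.
exists (maxn m N2) => n; rewrite geq_max => /andP[n1 n2] l.
have [s [Hs hs]] := Hm n n1 l.
have [rho [Hr hr]] := HN2 n n2.
exists (s + iota (f x) * rho); split.
  apply: sums_to_ext (sums_toD Hs (sums_toZ (iota (f x)) Hr)) => k.
  by rewrite /y linear_functionalB // rmorphB; ring.
have -> : s + iota (f x) * rho - iota (f x) = s + iota (f x) * (rho - 1) by ring.
apply: le_lt_trans (ler_normD _ _) _; rewrite [ltRHS](splitr e).
apply: ltr_leD; first by apply: le_lt_trans hs _; rewrite gtr_pMr // invf_lt1 // ltr1n.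
by apply: le_trans h2; rewrite normrM ler_wpM2l // ltW.
Qed.

Lemma FA_small_dual_space :
  (forall g, dual_ball X g -> forall b, 0 < b -> exists m, FA_small iota A y b m g) ->
  forall f, dual_space X f -> forall b, 0 < b -> exists m, FA_small iota A y b m f.
Proof.
move=> Hball f [lf [Mf Hf]] b b0.
pose c := `|Mf| + 1; have c0 : 0 < c by rewrite ltr_wpDl.
pose g u := c^-1 * f u.
have gball : dual_ball X g.
  split => [a u v|u]; first by rewrite /g lf mulrDr mulrCA.
  rewrite /g normrM (@ger0_norm _ c^-1) ?invr_ge0 ?(ltW c0) // ler_pdivrMl //.
  by apply: le_trans (dual_space_norm_bound Hf u) _; rewrite ler_wpM2r // lerDl.
have ic0 : 0 < iota c by rewrite lt0r iota_ge0 ?ltW // andbT fmorph_eq0 lt0r_neq0.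
have [m [_ Hm]] := Hball g gball _ (divr_gt0 b0 ic0).
exists m; split => // n nm l.
have [s [Hs hs]] := Hm n nm l.
exists (iota c * s); split.
  apply: sums_to_ext (sums_toZ (iota c) Hs) => k.
  by rewrite /g mulrCA rmorphM fmorphV mulVKf // gt_eqF.
by rewrite normrM (ger0_norm (ltW ic0)) mulrC -ler_pdivlMr.
Qed.

End Reduction.

Theorem FA_convergent_dual_space (R : realType) (K : numFieldType) (X : normedModType K)
    (iota : {rmorphism K -> R[i]}) (B : set (X -> K)) (A : nat -> nat -> R[i])
    (xs : nat -> X) (x : X) :
  (forall a : K, `|iota a| = iota `|a|) ->
  (forall a b : K, a <= b -> iota a <= iota b) ->
  (forall e : R[i], 0 < e -> exists2 d : K, 0 < d & iota d <= e) ->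
  (exists Ma, forall n m, \sum_(k < m) `|A n k| <= Ma) ->
  (forall e : R[i], 0 < e -> exists N : nat, forall n : nat, (N <= n)%N ->
     exists sigma : R[i], series_sums_to (A n) sigma /\ `|sigma - 1| < e) ->
  B `<=` dual_ball X -> I_generates B -> bounded_X_seq xs ->
  (forall f, B f -> FA_convergent A (fun n => iota (f (xs n))) (iota (f x))) ->
  forall f, dual_space X f -> FA_convergent A (fun n => iota (f (xs n))) (iota (f x)).
Proof.
move=> iota_norm iota_le iota_small [Ma A_abs] A_rows BB HI xs_bd HB f fd.
have [Mx HMx] := xs_bd.
have y_bd k : `|xs k - x| <= Mx + `|x| by apply: le_trans (ler_normB _ _) _; rewrite lerD2r.
apply: FA_convergent_of_FA_small => //.
apply: FA_small_dual_space => // g gball.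
apply: (dual_ball_FA_small iota_norm iota_le iota_small A_abs y_bd BB HI) => // b b0 h Bh.
by apply: FA_small_of_FA_convergent => //; [case: (BB _ Bh) | exact: HB].
Qed.

Section Cesaro.
Variable R : realType.
Local Notation C := R[i].

Definition cesaro (n k : nat) : C := if (k < n)%N then (n%:R^-1 : R)%:C else 0.

Lemma cesaro_ge0 n k : 0 <= cesaro n k.
Proof. by rewrite /cesaro; case: ifP => // _; rewrite ler0c invr_ge0. Qed.

Lemma cesaro_partial_sum (c : nat -> R) n m : (n <= m)%N ->
  \sum_(k < m) cesaro n k * (c k)%:C = (n%:R^-1 * \sum_(k < n) c k)%:C.
Proof.
move=> nm; rewrite -(big_mkord xpredT (fun k => cesaro n k * (c k)%:C)).
rewrite (@big_cat_nat _ _ _ n 0 m _ _ (leq0n n) nm) /=.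
rewrite [X in _ + X]big_nat_cond [X in _ + X]big1 ?addr0; last first.
  by move=> k /andP[/andP[nk _] _]; rewrite /cesaro ltnNge nk mul0r.
rewrite big_mkord rmorphM rmorph_sum /= mulr_sumr; apply: eq_bigr => k _.
by rewrite /cesaro ltn_ord.
Qed.

Lemma cesaro_row_sum n m : (0 < n <= m)%N -> \sum_(k < m) cesaro n k = 1.
Proof.
move=> /andP[n0 nm].
rewrite (eq_bigr (fun k : 'I_m => cesaro n k * (1 : R)%:C)) => [|k _]; last by rewrite mulr1.
by rewrite (cesaro_partial_sum (fun=> 1)) // sumr_const card_ord mulVf ?pnatr_eq0 -?lt0n.
Qed.

Lemma cesaro_abs_bounded n m : \sum_(k < m) `|cesaro n k| <= 1.
Proof.
rewrite (eq_bigr (fun k : 'I_m => cesaro n k)) => [|k _]; last by rewrite ger0_norm ?cesaro_ge0.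
case: n => [|n]; first by rewrite big1 // => k _; rewrite /cesaro ltn0.
apply: (@le_trans _ _ (\sum_(k < maxn m n.+1) cesaro n.+1 k)).
  by apply: (@ler_sum_ord_prefix _ (cesaro n.+1)) => //; [exact: cesaro_ge0 | exact: leq_maxl].
by rewrite cesaro_row_sum // leq_maxr.
Qed.

Lemma cesaro_row_sums_to1 n : (0 < n)%N -> series_sums_to (cesaro n) 1.
Proof.
by move=> n0 e e0; exists n => m nm; rewrite cesaro_row_sum ?n0 // subrr normr0.
Qed.

End Cesaro.

Section WindowAverages.
Variable R : realType.
Implicit Types (s u : nat -> R) (t : R).

Definition window_avg s (p l : nat) : R := p%:R^-1 * \sum_(k < p) s (k + l)%N.

(* Lorentz's characterization of almost convergence. *)
Definition window_cvg s t : Prop := forall e : R, 0 < e ->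
  exists N, forall n, (N <= n)%N -> forall l, `|window_avg s n l - t| < e.

Lemma window_avg_bounded s M p l : (0 < p)%N -> (forall k, `|s k| <= M) ->
  `|window_avg s p l| <= M.
Proof.
move=> p0 hM; rewrite /window_avg normrM ger0_norm ?invr_ge0 ?ler0n //.
rewrite ler_pdivrMl ?ltr0n //; apply: le_trans (ler_norm_sum _ _ _) _.
apply: (@le_trans _ _ (\sum_(k < p) M)); first by apply: ler_sum => k _; exact: hM.
by rewrite sumr_const card_ord mulr_natl.
Qed.

Lemma window_avg_lin (a : R) s u p l :
  window_avg (fun k => a * s k + u k) p l = a * window_avg s p l + window_avg u p l.
Proof. by rewrite /window_avg big_split /= -mulr_sumr mulrDr mulrCA. Qed.

Lemma window_avg_cst (c : R) p l : (0 < p)%N -> window_avg (fun=> c) p l = c.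
Proof.
by move=> p0; rewrite /window_avg sumr_const card_ord -[c *+ p]mulr_natl mulKf // pnatr_eq0 -lt0n.
Qed.

Lemma window_avg_ge0 s p l : (forall k, 0 <= s k) -> 0 <= window_avg s p l.
Proof. by move=> s0; rewrite mulr_ge0 ?invr_ge0 ?sumr_ge0. Qed.

Lemma window_avg_shift s p l :
  window_avg (fun k => s k.+1) p l - window_avg s p l = p%:R^-1 * (s (p + l)%N - s l).
Proof.
rewrite /window_avg -mulrBr /=; congr (_ * _).
have h1 : \sum_(k < p.+1) s (k + l)%N = s l + \sum_(k < p) s (k + l)%N.+1.
  by rewrite big_ord_recl /=; congr (_ + _); apply: eq_bigr => i _.
have h2 : \sum_(k < p.+1) s (k + l)%N = \sum_(k < p) s (k + l)%N + s (p + l)%N.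
  by rewrite big_ord_recr.
lra.
Qed.

Lemma cesaro_FA_convergentP s t :
  FA_convergent (@cesaro R) (fun n => (s n)%:C) t%:C <->
  bounded_real_seq s /\ window_cvg s t.
Proof.
split=> [[[M HM] H]|[[M HM] HU]]; split.
- by exists (CRe M) => n; have := ler_Re (HM n); rewrite normcR.
- move=> e e0; have e2C : 0 < (e / 2)%:C by rewrite ltcR divr_gt0.
  have [N HN] := H _ e2C.
  exists (maxn N 1) => n; rewrite geq_max => /andP[Nn n1] l.
  have [sg [Hsg hsg]] := HN n Nn l.
  have [N' HN'] := Hsg _ e2C.
  have := HN' (maxn n N') (leq_maxr _ _).
  rewrite (cesaro_partial_sum (fun k => s (k + l)%N)) ?leq_maxl // => h.
  suff : `|(window_avg s n l)%:C - t%:C| < (e / 2)%:C + (e / 2)%:C.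
    by rewrite -rmorphB -rmorphD normcR ltcR -splitr.
  by apply: le_lt_trans (ler_distD sg _ _) _; apply: ltrD.
- by exists M%:C => n; rewrite normcR lecR.
- move=> e /gt0_complex_real [-> e0]; have [N HN] := HU _ e0.
  exists (maxn N 1) => n; rewrite geq_max => /andP[Nn n1] l.
  exists (window_avg s n l)%:C; split; last by rewrite -rmorphB normcR ltcR HN.
  move=> e' e'0; exists n => m nm.
  by rewrite (cesaro_partial_sum (fun k => s (k + l)%N)) // subrr normr0.
Qed.

End WindowAverages.

Section BanachLimits.
Variables (R : realType) (L : (nat -> R) -> R).
Hypothesis BL : BanachLimit L.
Implicit Types (s u : nat -> R).

Lemma bounded_real_seq_cst (c : R) : bounded_real_seq (fun=> c).
Proof. by exists `|c|. Qed.

Lemma bounded_real_seq_lin (a : R) s u : bounded_real_seq s -> bounded_real_seq u ->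
  bounded_real_seq (fun k => a * s k + u k).
Proof.
move=> [M HM] [N HN]; exists (`|a| * M + N) => k.
by apply: le_trans (ler_normD _ _) _; rewrite normrM lerD // ler_wpM2l.
Qed.

Lemma bounded_real_seq_window_sum s p : bounded_real_seq s ->
  bounded_real_seq (fun l => \sum_(k < p) s (k + l)%N).
Proof.
move=> [M HM]; exists (\sum_(k < p) M) => l.
by apply: le_trans (ler_norm_sum _ _ _) _; apply: ler_sum => k _.
Qed.

Lemma BanachLimit0 : L (fun=> 0) = 0.
Proof.
have [lin _ _ _] := BL.
have := lin 1 _ _ (bounded_real_seq_cst 0) (bounded_real_seq_cst 0).
rewrite !mul1r addr0 => h.
by apply/esym/(@addrI _ (L (fun=> 0))); rewrite addr0 -h.
Qed.

Lemma BanachLimitZ a s : bounded_real_seq s -> L (fun k => a * s k) = a * L s.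
Proof.
have [lin _ _ _] := BL => bs.
have := lin a s _ bs (bounded_real_seq_cst 0); rewrite BanachLimit0 addr0 => <-.
by congr L; apply: funext => k; rewrite addr0.
Qed.

Lemma BanachLimitD s u : bounded_real_seq s -> bounded_real_seq u ->
  L (fun k => s k + u k) = L s + L u.
Proof.
have [lin _ _ _] := BL => bs bu; have := lin 1 s u bs bu; rewrite mul1r => <-.
by congr L; apply: funext => k; rewrite mul1r.
Qed.

Lemma BanachLimit_cst c : L (fun=> c) = c.
Proof.
have [_ L1 _ _] := BL.
transitivity (L (fun k => c * (fun=> 1) k)).
  by congr L; apply: funext => k; rewrite mulr1.
by rewrite BanachLimitZ ?L1 ?mulr1 //; exact: bounded_real_seq_cst.
Qed.

Lemma BanachLimit_le s u : bounded_real_seq s -> bounded_real_seq u ->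
  (forall k, s k <= u k) -> L s <= L u.
Proof.
have [lin _ pos _] := BL => bs bu su.
have := pos _ (bounded_real_seq_lin (-1) bs bu) (fun k => _ : 0 <= -1 * s k + u k).
rewrite lin // mulN1r addrC subr_ge0; apply => k.
by rewrite mulN1r addrC subr_ge0.
Qed.

Lemma BanachLimit_shiftn s j : bounded_real_seq s -> L (fun k => s (j + k)%N) = L s.
Proof.
have [_ _ _ shift] := BL => bs; elim: j => [|j IH]; first by congr L; apply: funext.
rewrite -IH -(shift (fun k => s (j + k)%N)); last by case: bs => M HM; exists M.
by congr L; apply: funext => k; rewrite addSnnS.
Qed.

Lemma BanachLimit_window_sum s p : bounded_real_seq s ->
  L (fun l => \sum_(k < p) s (k + l)%N) = p%:R * L s.
Proof.
move=> bs; elim: p => [|p IH].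
  have -> : (fun l => \sum_(k < 0) s (k + l)%N) = fun=> 0.
    by apply: funext => l; rewrite big_ord0.
  by rewrite BanachLimit0 mul0r.
transitivity (L (fun l => \sum_(k < p) s (k + l)%N + s (p + l)%N)).
  by congr L; apply: funext => l; rewrite big_ord_recr.
rewrite BanachLimitD; [|exact: bounded_real_seq_window_sum|by case: bs => M HM; exists M].
by rewrite IH BanachLimit_shiftn // -addn1 natrD mulrDl mul1r.
Qed.

Lemma BanachLimit_window_avg s p : (0 < p)%N -> bounded_real_seq s ->
  L (fun l => window_avg s p l) = L s.
Proof.
move=> p0 bs; rewrite BanachLimitZ; last exact: bounded_real_seq_window_sum.
by rewrite BanachLimit_window_sum // mulKf // pnatr_eq0 -lt0n.
Qed.

(* [L s] is also the Banach limit of the window averages of length [p], which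
   lie in [t - e, t + e] once [p] is large. *)
Lemma BanachLimit_window_cvg s t : bounded_real_seq s -> window_cvg s t -> L s = t.
Proof.
move=> bs HU.
have near_t e : 0 < e -> t - e <= L s <= t + e.
  move=> e0; have [N HN] := HU _ e0; pose p := maxn N 1.
  have hw l : t - e <= window_avg s p l <= t + e.
    by have := HN p (leq_maxl _ _) l; rewrite ltr_distl => /andP[/ltW -> /ltW ->].
  have bw : bounded_real_seq (fun l => window_avg s p l).
    by case: bs => M HM; exists M => l; apply: window_avg_bounded; rewrite ?leq_maxr.
  rewrite -(@BanachLimit_window_avg s p) ?leq_maxr //.
  rewrite -{1}[t - e]BanachLimit_cst -{1}[t + e]BanachLimit_cst.
  apply/andP; split.
    by apply: BanachLimit_le (bounded_real_seq_cst _) bw _ => l; have /andP[] := hw l.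
  by apply: BanachLimit_le bw (bounded_real_seq_cst _) _ => l; have /andP[] := hw l.
apply/eqP; rewrite eq_le; apply/andP; split; apply/ler_addgt0Pr => e e0;
  have /andP[h1 h2] := near_t e e0; lra.
Qed.

End BanachLimits.

Section UltrafilterLimits.
Variables (R : realType) (G : set_system nat).
Hypothesis UG : UltraFilter G.

Lemma ultra_cvg_bounded (v : nat -> R) M : (forall j, `|v j| <= M) -> cvg (v @ G).
Proof.
move=> vM.
have vG : (v @ G) `[- M, M]%classic.
  by apply: (@filterE _ G) => j; rewrite /= in_itv /= -ler_norml.
have [q [_ clq]] := segment_compact _ vG.
apply/cvg_ex; exists q => U Uq.
have [//|GnU] := in_ultra_setVsetC (v @^-1` U) UG.
by have [z [nUz Uz]] := clq (~` U) U GnU Uq.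
Qed.

Variables (p l : nat -> nat).
Hypothesis p_gt : forall j, (j < p j)%N.
Hypothesis G_infty : \oo `<=` G.

Let p_gt0 j : (0 < p j)%N := leq_ltn_trans (leq0n j) (p_gt j).

Let W (u : nat -> R) j := window_avg u (p j) (l j).

Let cvgW u : bounded_real_seq u -> W u @ G --> lim (W u @ G).
Proof. by move=> [M HM]; apply: (@ultra_cvg_bounded _ M) => j; exact: window_avg_bounded. Qed.

(* Shifting [u] moves each window average by at most [2M / p j], and [p j -> oo]. *)
Let cvgW_shift u : bounded_real_seq u -> W (fun k => u k.+1) j - W u j @[j --> G] --> 0.
Proof.
move=> [M HM]; have M0 : 0 <= M := le_trans (normr_ge0 _) (HM 0%N).
apply/cvgrPdist_lt => eps eps0; apply: G_infty.
near=> j; rewrite sub0r normrN /W window_avg_shift normrM ger0_norm ?invr_ge0 //.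
rewrite ltr_pdivrMl ?ltr0n //; apply: le_lt_trans (ler_normB _ _) _.
apply: le_lt_trans (lerD (HM _) (HM _)) _.
rewrite -ltr_pdivrMr //; apply: (@le_lt_trans _ _ j%:R); last by rewrite ltr_nat p_gt.
near: j; exact: nbhs_infty_ger.
Unshelve. all: by end_near. Qed.

Lemma window_ultralimit_BanachLimit : BanachLimit (fun u => lim (W u @ G)).
Proof.
split.
- move=> a s u bs bu; apply: (cvg_lim (@Rhausdorff R)).
  have -> : W (fun k => a * s k + u k) = fun j => a * W s j + W u j.
    by apply: funext => j; rewrite /W window_avg_lin.
  by apply: cvgD; [exact: cvgMr (cvgW bs) | exact: cvgW bu].
- apply: (cvg_lim (@Rhausdorff R)); have -> : W (fun=> 1) = fun=> 1.
    by apply: funext => j; rewrite /W window_avg_cst.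
  exact: cvg_cst.
- by move=> u bu u0; apply: limr_ge; [exact: cvgW | apply: filterE => j; exact: window_avg_ge0].
- move=> u bu; apply: (cvg_lim (@Rhausdorff R)).
  have -> : W (fun k => u k.+1) = fun j => (W (fun k => u k.+1) j - W u j) + W u j.
    by apply: funext => j; rewrite subrK.
  by rewrite -[lim _]add0r; apply: cvgD; [exact: cvgW_shift bu | exact: cvgW bu].
Qed.

End UltrafilterLimits.

Lemma almost_convergent_window_cvg (R : realType) (s : nat -> R) t :
  almost_convergent s t -> window_cvg s t.
Proof.
move=> [bs HL] e e0; apply: contrapT => hN.
have /choice [pl Hpl] : forall j, exists pl : nat * nat,
    (j < pl.1)%N /\ e <= `|window_avg s pl.1 pl.2 - t|.
  move=> j; apply: contrapT => hj; apply: hN; exists j.+1 => n jn l.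
  by rewrite ltNge; apply/negP => le; apply: hj; exists (n, l).
have [G [UG sG]] : exists G : set_system nat, UltraFilter G /\ \oo `<=` G.
  exact: ultraFilterLemma.
have BL := @window_ultralimit_BanachLimit R G UG (fun j => (pl j).1) (fun j => (pl j).2) (fun j => (Hpl j).1) sG.
have [M HM] := bs.
have cvs : window_avg s (pl j).1 (pl j).2 @[j --> G] --> t.
  rewrite -(HL _ BL); apply: (@ultra_cvg_bounded _ _ UG _ M) => j.
  by apply: window_avg_bounded => //; exact: leq_ltn_trans (leq0n j) (Hpl j).1.
have /cvgrPdist_lt/(_ e e0)/filter_ex [j] := cvs.
by rewrite distrC; have := (Hpl j).2; lra.
Qed.

Lemma almost_convergentP (R : realType) (s : nat -> R) t :
  almost_convergent s t <-> bounded_real_seq s /\ window_cvg s t.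
Proof.
split=> [ac|[bs HU]]; first by split; [case: ac | exact: almost_convergent_window_cvg].
by split=> // L BL; exact: BanachLimit_window_cvg.
Qed.

Lemma FA_convergent_dual_space_real (R : realType) (X : normedModType R)
    (B : set (X -> R)) (A : nat -> nat -> R[i]) (xs : nat -> X) (x : X) :
  (exists Ma, forall n m, \sum_(k < m) `|A n k| <= Ma) ->
  (forall e : R[i], 0 < e -> exists N : nat, forall n : nat, (N <= n)%N ->
     exists sigma : R[i], series_sums_to (A n) sigma /\ `|sigma - 1| < e) ->
  B `<=` dual_ball X -> I_generates B -> bounded_X_seq xs ->
  (forall f, B f -> FA_convergent A (fun n => (f (xs n))%:C) (f x)%:C) ->
  forall f, dual_space X f -> FA_convergent A (fun n => (f (xs n))%:C) (f x)%:C.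
Proof.
apply: (@FA_convergent_dual_space R R X (real_complex R)) => [a|a b|e].
- exact: normcR.
- by rewrite lecR.
- by move=> /gt0_complex_real [eE e0]; exists (CRe e); rewrite // {2}eE.
Qed.

Unset Implicit Arguments.

Theorem corollary3p6 (R : realType) :
  (forall (X : completeNormedModType R[i]) (B : set (X -> R[i]))
          (A : nat -> nat -> R[i]) (xs : nat -> X) (x : X),
      B `<=` dual_ball X -> I_generates B -> regular_matrix A ->
      bounded_X_seq xs ->
      (forall f, B f -> FA_convergent A (fun n => f (xs n)) (f x)) ->
      forall f, dual_space X f -> FA_convergent A (fun n => f (xs n)) (f x))
  /\
  (forall (X : completeNormedModType R) (B : set (X -> R))
          (A : nat -> nat -> R[i]) (xs : nat -> X) (x : X),
      B `<=` dual_ball X -> I_generates B -> regular_matrix A ->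
      bounded_X_seq xs ->
      (forall f, B f -> FA_convergent A (fun n => (f (xs n))%:C) (f x)%:C) ->
      forall f, dual_space X f -> FA_convergent A (fun n => (f (xs n))%:C) (f x)%:C)
  /\
  (forall (X : completeNormedModType R) (B : set (X -> R))
          (xs : nat -> X) (x : X),
      B `<=` dual_ball X -> I_generates B -> bounded_X_seq xs ->
      (forall f, B f -> almost_convergent (fun n => f (xs n)) (f x)) ->
      forall f, dual_space X f -> almost_convergent (fun n => f (xs n)) (f x)).
Proof.
split; [|split].
- move=> X B A xs x BB HI [A_abs A_rows _].
  by apply: (@FA_convergent_dual_space R _ X idfun) => // e e0; exists e.
- by move=> X B A xs x BB HI [A_abs A_rows _]; exact: FA_convergent_dual_space_real.
- move=> X B xs x BB HI xs_bd HB f fd.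
  apply/almost_convergentP/cesaro_FA_convergentP.
  apply: (FA_convergent_dual_space_real _ _ BB HI xs_bd) fd => [||g Bg].
  + by exists 1; exact: cesaro_abs_bounded.
  + move=> e e0; exists 1%N => n n1; exists 1.
    by rewrite subrr normr0; split; first exact: cesaro_row_sums_to1.
  + exact/cesaro_FA_convergentP/almost_convergentP/HB.
Qed.
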